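(* Let $\mathfrak{C}\subset(\mathbb{C}\setminus\{0\})^2\times\mathbb{C}$ be the hypersurface in coordinates $(s,u,c)$ defined by $$0=(s-s^{-1})(u-u^{-1})+c\,(s^{-2}u^{-2}-u^{-2}-s^{-2}+4-s^2-u^2+s^2u^2)+c^2(2s^{-1}u^{-1}-su^{-1}-s^{-1}u+2su)+c^3,$$ let $e:\mathfrak{C}\to(\mathbb{C}\setminus\{0\})^4$, $e(s,u,c)=(s,t,u,v)$ with $$t=s^{-2}-s^{-2}u^2+u^2+c\,(2s^{-1}u+s^{-3}u^{-1}-s^{-3}u)+c^2s^{-2},\qquad v=u^{-2}-u^{-2}s^2+s^2+c\,(2u^{-1}s+u^{-3}s^{-1}-u^{-3}s)+c^2u^{-2},$$ and let $\mathfrak{E}_0$ be the Zariski closure of $e(\mathfrak{C})$. Let $\overline{\mathfrak{C}}\subset(\mathbb{C}\setminus\{0\})^2\times\mathbb{C}$ be the hypersurface in coordinates $(\bar s,\bar u,d)$ defined by $$0=\bar s\bar u(\bar s-1)(\bar u-1)+d\,(1-\bar s-\bar u+4\bar s\bar u-\bar s^2\bar u-\bar s\bar u^2+\bar s^2\bar u^2)+d^2(2-\bar s-\bar u+2\bar s\bar u)+d^3,$$ let $\bar e:\overline{\mathfrak{C}}\to(\mathbb{C}\setminus\{0\})^4$, $\bar e(\bar s,\bar u,d)=(\bar s,\bar t,\bar u,\bar v)$ with $$\bar t=\bar s^{-1}-\bar s^{-1}\bar u+\bar u+d\,(2\bar s^{-1}+\bar s^{-2}\bar u^{-1}-\bar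 s^{-2})+d^2\bar s^{-2}\bar u^{-1},\qquad \bar v=\bar u^{-1}-\bar u^{-1}\bar s+\bar s+d\,(2\bar u^{-1}+\bar u^{-2}\bar s^{-1}-\bar u^{-2})+d^2\bar u^{-2}\bar s^{-1},$$ and let $\overline{\mathfrak{E}}_0$ be the Zariski closure of $\bar e(\overline{\mathfrak{C}})$. Then $\mathfrak{C}$ and $\mathfrak{E}_0$ are birationally equivalent, and $\overline{\mathfrak{C}}$ and $\overline{\mathfrak{E}}_0$ are birationally equivalent.
   Context: Here $W$ is the complement of the right-handed Whitehead link, with $\pi_1(W)=\langle\mathcal{M}_0,\mathcal{M}_1\mid \mathcal{M}_1\mathcal{M}_0\mathcal{M}_1\mathcal{M}_0^{-1}\mathcal{M}_1^{-1}\mathcal{M}_0^{-1}\mathcal{M}_1\mathcal{M}_0=\mathcal{M}_0\mathcal{M}_1\mathcal{M}_0^{-1}\mathcal{M}_1^{-1}\mathcal{M}_0^{-1}\mathcal{M}_1\mathcal{M}_0\mathcal{M}_1\rangle$. $\mathfrak{C}$ is the (irreducible) variety of representations $\rho(\mathcal{M}_0)=\begin{pmatrix}s&c\\0&s^{-1}\end{pmatrix}$, $\rho(\mathcal{M}_1)=\begin{pmatrix}u&0\\1&u^{-1}\end{pmatrix}$ into $SL_2(\mathbb{C})$, and $\overline{\mathfrak{C}}$ the analogous variety of representations $\mathcal{M}_0\mapsto\begin{pmatrix}\bar s&d\\0&1\end{pmatrix}$, $\mathcal{M}_1\mapsto\begin{pmatrix}\bar u&0\\1&1\end{pmatrix}$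 into $GL_2(\mathbb{C})$ (corresponding to $PSL_2(\mathbb{C})$-representations). The maps $e,\bar e$ record the upper-left entries of the images of $\mathcal{M}_0$, $\mathcal{L}_0^t$, $\mathcal{M}_1$, $\mathcal{L}_1^t$, where $\mathcal{L}_0^t=\mathcal{M}_0^{-1}\mathcal{M}_1\mathcal{M}_0\mathcal{M}_1^{-1}\mathcal{M}_0^{-1}\mathcal{M}_1^{-1}\mathcal{M}_0\mathcal{M}_1$ and $\mathcal{L}_1^t=\mathcal{M}_1^{-1}\mathcal{M}_0\mathcal{M}_1\mathcal{M}_0^{-1}\mathcal{M}_1^{-1}\mathcal{M}_0^{-1}\mathcal{M}_1\mathcal{M}_0$ are the null-homologous longitudes; $\mathfrak{E}_0$ and $\overline{\mathfrak{E}}_0$ are the components of the $SL_2(\mathbb{C})$- and $PSL_2(\mathbb{C})$-eigenvalue varieties of $W$ corresponding to the Dehn surgery component. *)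

From HB Require Import structures.
From mathcomp Require Import all_boot all_order all_algebra all_field.
From mathcomp Require Import mpoly.
Set Implicit Arguments. Unset Strict Implicit. Unset Printing Implicit Defensive.
Import Order.TTheory GRing.Theory.
Local Open Scope ring_scope.

Section AffineGeometry.
Variable K : fieldType.

Definition pt (n : nat) := 'I_n -> K.

Definition torus (n : nat) (x : pt n) : Prop := forall i, x i != 0.

Definition zclosure (n : nat) (S : pt n -> Prop) (x : pt n) : Prop :=
  forall p : {mpoly K[n]}, (forall y, S y -> p.@[y] = 0) -> p.@[x] = 0.

Definition zopen (n : nat) (O : pt n -> Prop) : Prop :=
  exists P : {mpoly K[n]} -> Prop,
    forall x, O x <-> exists p, P p /\ p.@[x] != 0.

Definition dense_open_in (n : nat) (U X : pt n -> Prop) : Prop :=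
  (exists O, zopen O /\ forall x, U x <-> (X x /\ O x)) /\
  (forall x, X x -> zclosure U x).

Definition rat_eval (m n : nat) (a b : 'I_n -> {mpoly K[m]}) (x : pt m) : pt n :=
  fun i => (a i).@[x] / (b i).@[x].
Definition rat_defined (m n : nat) (b : 'I_n -> {mpoly K[m]}) (x : pt m) : Prop :=
  forall i, (b i).@[x] != 0.

Definition birational (m n : nat) (X : pt m -> Prop) (Y : pt n -> Prop) : Prop :=
  exists (U : pt m -> Prop) (V : pt n -> Prop)
         (fa fb : 'I_n -> {mpoly K[m]}) (ga gb : 'I_m -> {mpoly K[n]}),
    [/\ dense_open_in U X /\ dense_open_in V Y,
        forall x, U x -> rat_defined fb x /\ V (rat_eval fa fb x),
        forall y, V y -> rat_defined gb y /\ U (rat_eval ga gb y),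
        forall x, U x -> forall i, rat_eval ga gb (rat_eval fa fb x) i = x i
      & forall y, V y -> forall j, rat_eval fa fb (rat_eval ga gb y) j = y j].

Definition c0 {n} : 'I_n.+1 := @Ordinal n.+1 0 isT.
Definition c1 {n} : 'I_n.+2 := @Ordinal n.+2 1 isT.
Definition c2 {n} : 'I_n.+3 := @Ordinal n.+3 2 isT.
Definition c3 {n} : 'I_n.+4 := @Ordinal n.+4 3 isT.

Definition C_eq (s u c : K) : K :=
  (s - s^-1) * (u - u^-1)
  + c * (s ^- 2 * u ^- 2 - u ^- 2 - s ^- 2 + 4 - s ^+ 2 - u ^+ 2 + s ^+ 2 * u ^+ 2)
  + c ^+ 2 * (2 * s^-1 * u^-1 - s * u^-1 - s^-1 * u + 2 * s * u)
  + c ^+ 3.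

Definition frakC (x : pt 3) : Prop :=
  x c0 != 0 /\ x c1 != 0 /\ C_eq (x c0) (x c1) (x c2) = 0.

Definition e_t (s u c : K) : K :=
  s ^- 2 - s ^- 2 * u ^+ 2 + u ^+ 2
  + c * (2 * s^-1 * u + s ^- 3 * u^-1 - s ^- 3 * u) + c ^+ 2 * s ^- 2.
Definition e_v (s u c : K) : K :=
  u ^- 2 - u ^- 2 * s ^+ 2 + s ^+ 2
  + c * (2 * u^-1 * s + u ^- 3 * s^-1 - u ^- 3 * s) + c ^+ 2 * u ^- 2.

Definition emap (x : pt 3) : pt 4 :=
  fun i => match val i with
           | 0 => x c0
           | 1 => e_t (x c0) (x c1) (x c2)
           | 2 => x c1
           | _ => e_v (x c0) (x c1) (x c2)
           end.

Definition frakE0 (y : pt 4) : Prop :=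
  torus y /\ zclosure (fun z => exists x, frakC x /\ forall i, z i = emap x i) y.

Definition Cbar_eq (s u d : K) : K :=
  s * u * (s - 1) * (u - 1)
  + d * (1 - s - u + 4 * s * u - s ^+ 2 * u - s * u ^+ 2 + s ^+ 2 * u ^+ 2)
  + d ^+ 2 * (2 - s - u + 2 * s * u)
  + d ^+ 3.

Definition frakCbar (x : pt 3) : Prop :=
  x c0 != 0 /\ x c1 != 0 /\ Cbar_eq (x c0) (x c1) (x c2) = 0.

Definition ebar_t (s u d : K) : K :=
  s^-1 - s^-1 * u + u + d * (2 * s^-1 + s ^- 2 * u^-1 - s ^- 2)
  + d ^+ 2 * s ^- 2 * u^-1.
Definition ebar_v (s u d : K) : K :=
  u^-1 - u^-1 * s + s + d * (2 * u^-1 + u ^- 2 * s^-1 - u ^- 2)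
  + d ^+ 2 * u ^- 2 * s^-1.

Definition ebarmap (x : pt 3) : pt 4 :=
  fun i => match val i with
           | 0 => x c0
           | 1 => ebar_t (x c0) (x c1) (x c2)
           | 2 => x c1
           | _ => ebar_v (x c0) (x c1) (x c2)
           end.

Definition frakE0bar (y : pt 4) : Prop :=
  torus y /\ zclosure (fun z => exists x, frakCbar x /\ forall i, z i = ebarmap x i) y.

End AffineGeometry.

From mathcomp Require Import all_boot all_order all_algebra all_field.
From mathcomp Require Import mpoly.
From mathcomp Require Import ring.
Set Implicit Arguments. Unset Strict Implicit. Unset Printing Implicit Defensive.
Import GRing.Theory.
Local Open Scope ring_scope.

(* Both varieties are cubic hypersurfaces [C(s, u, c) = 0] over the torus of [(s, u)], and the map
   [e] keeps [s] and [u].  On its image [c] is recovered as [kappa(s, t, u, v) / h(s, u)]; clearing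
   denominators in [t = e_t(s, u, kappa / h)], [v = e_v(s, u, kappa / h)] and
   [C(s, u, kappa / h) = 0] gives polynomials vanishing on [E_0].  Hence [e] and
   [(s, t, u, v) |-> (s, u, kappa / h)] are inverse to each other over the locus where [h], [s u],
   the leading coefficient and the discriminant of the cubic in [c] do not vanish.  That locus is
   dense: reducing a polynomial modulo the cubic by pseudo-division leaves a remainder of degree at
   most 2 in [c] that vanishes at three distinct roots over a nonempty open set of [(s, u)], hence
   everywhere.  Applied to [p \o e], a Laurent polynomial in [s, u], the same argument gives
   density in [E_0].  In characteristic 0 the point [(s, u) = (2, 3)] is generic. *)

Definition disc3 (R : comPzRingType) (l b2 b1 b0 : R) : R :=
  b2 ^+ 2 * b1 ^+ 2 - 4 * b1 ^+ 3 * l - 4 * b2 ^+ 3 * b0 - 27 * b0 ^+ 2 * l ^+ 2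
  + 18 * b2 * b1 * b0 * l.

Definition pt_of (K : fieldType) n (s : seq K) : pt K n := fun i => nth 0 s i.

Lemma mevalXn (R : comNzRingType) n (v : 'I_n -> R) (p : {mpoly R[n]}) k :
  (p ^+ k).@[v] = p.@[v] ^+ k.
Proof. exact: rmorphXn. Qed.

Lemma meval_nat (R : comNzRingType) n (v : 'I_n -> R) k : (k%:R : {mpoly R[n]}).@[v] = k%:R.
Proof. exact: rmorph_nat. Qed.

Ltac meval_simpl :=
  rewrite ?(mevalD, mevalB, mevalN, mevalM, mevalXn, meval_nat, mevalC, meval1, mevalXU).

Lemma meval_disc3 (R : comNzRingType) n (v : 'I_n -> R) (l b2 b1 b0 : {mpoly R[n]}) :
  (disc3 l b2 b1 b0).@[v] = disc3 l.@[v] b2.@[v] b1.@[v] b0.@[v].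
Proof. by rewrite /disc3; meval_simpl. Qed.

Section CubicRoots.
Variable K : closedFieldType.

Lemma monic_cubic_vieta (a b d : K) : exists z1 z2 z3 : K,
  [/\ a = - (z1 + z2 + z3), b = z1 * z2 + z1 * z3 + z2 * z3 & d = - (z1 * z2 * z3)].
Proof.
have [z1 hz1] := @solve_monicpoly K 3 (nth 0 [:: - d; - b; - a]) isT.
rewrite !big_ord_recr big_ord0 /= in hz1.
have [z2 hz2] := @solve_monicpoly K 2 (nth 0 [:: - (b + (a + z1) * z1); - (a + z1)]) isT.
rewrite !big_ord_recr big_ord0 /= in hz2.
have root1 : z1 ^+ 3 + a * z1 ^+ 2 + b * z1 + d = 0 by rewrite hz1; ring.
have root2 : z2 ^+ 2 + (a + z1) * z2 + (b + (a + z1) * z1) = 0 by rewrite hz2; ring.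
(* [z2] is a root of the quotient of the cubic by [c - z1]. *)
pose z3 := - (a + z1) - z2.
have ea : a = - (z1 + z2 + z3) by rewrite /z3; ring.
have eb : b = z1 * z2 + z1 * z3 + z2 * z3.
  by rewrite -[RHS]addr0 -root2 /z3; ring.
exists z1, z2, z3; split=> //.
by rewrite -[RHS]addr0 -root1 ea eb; ring.
Qed.

Lemma poly_eq0_on_cubic_roots (l b2 b1 b0 : K) (q : {poly K}) :
  l != 0 -> disc3 l b2 b1 b0 != 0 -> (size q <= 3)%N ->
  (forall c, l * c ^+ 3 + b2 * c ^+ 2 + b1 * c + b0 = 0 -> q.[c] = 0) -> q = 0.
Proof.
move=> l0 D0 sq qroots.
have [z1 [z2 [z3 [ea eb ed]]]] := monic_cubic_vieta (b2 / l) (b1 / l) (b0 / l).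
have cubicE c : l * c ^+ 3 + b2 * c ^+ 2 + b1 * c + b0 = l * ((c - z1) * (c - z2) * (c - z3)).
  by rewrite -[b2](mulfVK l0) -[b1](mulfVK l0) -[b0](mulfVK l0) ea eb ed; ring.
have discE : disc3 l b2 b1 b0 = l ^+ 4 * ((z1 - z2) * (z1 - z3) * (z2 - z3)) ^+ 2.
  by rewrite /disc3 -[b2](mulfVK l0) -[b1](mulfVK l0) -[b0](mulfVK l0) ea eb ed; ring.
move: D0; rewrite discE mulf_eq0 expf_eq0 (negbTE l0) /= expf_eq0 /= !mulf_eq0 !subr_eq0.
rewrite !negb_or => /andP[/andP[n12 n13] n23].
apply: (@roots_geq_poly_eq0 _ q [:: z1; z2; z3]) => //=.
  by rewrite /root !qroots ?eqxx // cubicE ?subrr ?(mul0r, mulr0).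
by rewrite !inE !negb_or n12 n13 n23.
Qed.

End CubicRoots.

Lemma ord2_cases (i : 'I_2) : i = c0 \/ i = c1.
Proof. by case: i => [[|[|k]] lt_i] //; [left|right]; apply: val_inj. Qed.

Lemma ord3_cases (i : 'I_3) : [\/ i = c0, i = c1 | i = c2].
Proof.
by case: i => [[|[|[|k]]] lt_i] //; [constructor 1|constructor 2|constructor 3]; apply: val_inj.
Qed.

Lemma ord4_cases (i : 'I_4) : [\/ i = c0, i = c1, i = c2 | i = c3].
Proof.
by case: i => [[|[|[|[|k]]]] lt_i] //; [constructor 1|constructor 2|constructor 3|constructor 4];
  apply: val_inj.
Qed.

Section ZariskiGeneralities.
Variable K : fieldType.

Lemma dense_open_in_principal n (X : pt K n -> Prop) (p : {mpoly K[n]}) :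
  (forall x, X x -> zclosure (fun z => X z /\ p.@[z] != 0) x) ->
  dense_open_in (fun z => X z /\ p.@[z] != 0) X.
Proof.
move=> dense; split=> //; exists (fun z => p.@[z] != 0); split=> //.
by exists (eq^~ p) => z; split=> [pz|[q [-> //]]]; exists p.
Qed.

Lemma rat_eval_ext m n (a b : 'I_n -> {mpoly K[m]}) y z :
  y =1 z -> rat_eval a b y =1 rat_eval a b z.
Proof. by move=> yz i; rewrite /rat_eval !(meval_eq _ yz). Qed.

Definition image_closure (X : pt K 3 -> Prop) (E : pt K 3 -> pt K 4) (y : pt K 4) :=
  torus y /\ zclosure (fun z => exists x, X x /\ forall i, z i = E x i) y.

Lemma image_closure_vanish X E (p : {mpoly K[4]}) y :
  image_closure X E y -> (forall x, X x -> p.@[E x] = 0) -> p.@[y] = 0.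
Proof.
by case=> _ cl pE; apply: cl => z [x [Xx zE]]; rewrite (meval_eq _ zE) pE.
Qed.

Lemma meval_comp2 n (p : {mpoly K[2]}) (i j : 'I_n) (v : pt K n) :
  (p \mPo [tuple 'X_i; 'X_j]).@[v] = p.@[pt_of [:: v i; v j]].
Proof.
rewrite comp_mpoly_meval; apply: meval_eq => k.
by case: k => [[|[|k]] lt_k] //=; rewrite /tnth /= mevalXU.
Qed.

End ZariskiGeneralities.

Section VanishingOnCubic.
Variables (K : closedFieldType) (n : nat).
Implicit Types (p g : {mpoly K[n]}) (w : 'I_n -> K).

Lemma poly_eq0_of_vanish (q : {poly K}) : (forall x, q.[x] = 0) -> q = 0.
Proof.
by move=> q0; apply/eqP; apply: contraT => /closed_nonrootP[x]; rewrite /root q0 eqxx.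
Qed.

Lemma horner_mmap (L : 'I_n -> {poly K}) p x :
  (mmap (@polyC K) L p).[x] = p.@[fun i => (L i).[x]].
Proof.
rewrite /mmap mevalE horner_sum; apply: eq_bigr => m _.
rewrite hornerM hornerC /mmap1 horner_prod; congr (_ * _).
by apply: eq_bigr => i _; rewrite horner_exp.
Qed.

(* Restrict to the line through [w] and a point [w1] where [g] does not vanish. *)
Lemma meval_eq0_on_principal_open g p w1 :
  g.@[w1] != 0 -> (forall w, g.@[w] != 0 -> p.@[w] = 0) -> forall w, p.@[w] = 0.
Proof.
move=> gw1 p0 w0.
pose L i := (w0 i)%:P + (w1 i - w0 i)%:P * 'X.
have L0 : (fun i => (L i).[0]) =1 w0.
  by move=> i; rewrite /L hornerD hornerM !hornerC hornerX mulr0 addr0.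
have L1 : (fun i => (L i).[1]) =1 w1.
  by move=> i; rewrite /L hornerD hornerM !hornerC hornerX mulr1 addrC subrK.
pose pL := mmap (@polyC K) L p; pose gL := mmap (@polyC K) L g.
have gL0 : gL != 0.
  by apply: contra gw1 => /eqP gL0; rewrite -(meval_eq _ L1) -horner_mmap -/gL gL0 horner0.
have /eqP : pL * gL = 0.
  apply: poly_eq0_of_vanish => x; rewrite hornerM !horner_mmap.
  by have [->|/p0->] := eqVneq g.@[fun i => (L i).[x]] 0; rewrite ?mulr0 ?mul0r.
rewrite mulf_eq0 (negbTE gL0) orbF => /eqP pL0.
by rewrite -(meval_eq _ L0) -horner_mmap -/pL pL0 horner0.
Qed.

Definition mhorner (P : {poly {mpoly K[n]}}) w : {poly K} := map_poly (meval w) P.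

Lemma mhornerD P Q w : mhorner (P + Q) w = mhorner P w + mhorner Q w.
Proof. exact: rmorphD. Qed.

Lemma mhornerM P Q w : mhorner (P * Q) w = mhorner P w * mhorner Q w.
Proof. exact: rmorphM. Qed.

Lemma mhornerZ p P w : mhorner (p *: P) w = p.@[w] *: mhorner P w.
Proof. exact: (map_polyZ (meval w)). Qed.

Lemma mhornerC p w : mhorner p%:P w = (p.@[w])%:P.
Proof. exact: (map_polyC (meval w)). Qed.

Lemma mhornerX w : mhorner 'X w = 'X.
Proof. exact: map_polyX. Qed.

Lemma mhorner_ext P w w' : w =1 w' -> mhorner P w = mhorner P w'.
Proof. by move=> ww'; apply: eq_map_poly => p; apply: meval_eq. Qed.

Lemma size_mhorner P w : (size (mhorner P w) <= size P)%N.
Proof. exact: size_poly. Qed.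

Definition cubic_at (l b2 b1 b0 : {mpoly K[n]}) w (c : K) :=
  l.@[w] * c ^+ 3 + b2.@[w] * c ^+ 2 + b1.@[w] * c + b0.@[w].

Lemma mhorner_cubic l b2 b1 b0 w c :
  (mhorner (Poly [:: b0; b1; b2; l]) w).[c] = cubic_at l b2 b1 b0 w c.
Proof.
rewrite /mhorner (@horner_coef_wide _ 4); last exact: leq_trans (size_mhorner _ _) (size_Poly _).
by rewrite !big_ord_recr big_ord0 !coef_map !coef_Poly /= /cubic_at; ring.
Qed.

(* Pseudo-divide [P] by the cubic: the remainder has degree at most 2 in [c],
   hence vanishes wherever the cubic has three distinct roots. *)
Lemma mhorner_eq0_on_cubic (l b2 b1 b0 g : {mpoly K[n]}) w1 (P : {poly {mpoly K[n]}}) :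
  (l * disc3 l b2 b1 b0 * g).@[w1] != 0 ->
  (forall w c, (l * disc3 l b2 b1 b0 * g).@[w] != 0 -> cubic_at l b2 b1 b0 w c = 0 ->
     (mhorner P w).[c] = 0) ->
  forall w c, l.@[w] != 0 -> cubic_at l b2 b1 b0 w c = 0 -> (mhorner P w).[c] = 0.
Proof.
set G := _ * g => Gw1 P0.
have l0 : l != 0 by apply: contra Gw1 => /eqP l0; rewrite /G l0 !mul0r meval0.
pose F := Poly [:: b0; b1; b2; l].
have sF : size F = 4 by rewrite (@PolyK _ 1).
have lcF : lead_coef F = l by rewrite lead_coefE sF coef_Poly.
have FcE w c : (mhorner F w).[c] = cubic_at l b2 b1 b0 w c by exact: mhorner_cubic.
have := Pdiv.Idomain.divp_eq P F; rewrite lcF.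
set k := scalp _ _; set Q := _ %/ _; set Rm := _ %% _ => divE.
have sRm : (size Rm <= 3)%N by have := ltn_modp P F; rewrite -size_poly_eq0 sF.
have evalE w c : l.@[w] ^+ k * (mhorner P w).[c]
    = (mhorner Q w).[c] * cubic_at l b2 b1 b0 w c + (mhorner Rm w).[c].
  have := congr1 (fun q => (mhorner q w).[c]) divE.
  by rewrite mhornerZ mhornerD mhornerM hornerD hornerM hornerZ FcE rmorphXn.
have Rm0 w : mhorner Rm w = 0.
  apply/polyP => i; rewrite coef0 coef_map /=.
  apply: (meval_eq0_on_principal_open Gw1) => {}w Gw.
  have [lw Dw] : l.@[w] != 0 /\ (disc3 l b2 b1 b0).@[w] != 0.
    by move: Gw; rewrite !mevalM !mulf_eq0 !negb_or => /andP[/andP[]].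
  suff Rmw0 : mhorner Rm w = 0.
    by have := congr1 (fun q : {poly K} => q`_i) Rmw0; rewrite coef_map coef0.
  apply: (@poly_eq0_on_cubic_roots _ _ b2.@[w] b1.@[w] b0.@[w] _ lw) => [||c cw].
  - by move: Dw; rewrite meval_disc3.
  - exact: leq_trans (size_mhorner _ _) sRm.
  by have := evalE w c; rewrite P0 // [cubic_at _ _ _ _ _ _]cw !mulr0 add0r.
move=> w c lw cw; have := evalE w c; rewrite cw Rm0 horner0 mulr0 addr0 => /eqP.
by rewrite mulf_eq0 expf_eq0 (negbTE lw) andbF => /eqP.
Qed.

End VanishingOnCubic.

Section Laurent.
Variable K : closedFieldType.
Implicit Types (x : pt K 3) (phi psi : pt K 3 -> K).

Definition base3 x : pt K 2 := pt_of [:: x c0; x c1].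

(* The functions of [K[s^-1, s, u^-1, u][c]] on the torus [s u != 0] of [K^3]. *)
Definition laurent phi := exists (P : {poly {mpoly K[2]}}) (N : nat),
  forall x, x c0 != 0 -> x c1 != 0 -> (x c0 * x c1) ^+ N * phi x = (mhorner P (base3 x)).[x c2].

Lemma laurent_ext phi psi : (forall x, x c0 != 0 -> x c1 != 0 -> phi x = psi x) ->
  laurent phi -> laurent psi.
Proof. by move=> eq_phi [P [N PE]]; exists P, N => x s0 u0; rewrite -eq_phi ?PE. Qed.

Lemma laurent_poly (P : {poly {mpoly K[2]}}) : laurent (fun x => (mhorner P (base3 x)).[x c2]).
Proof. by exists P, 0%N => x _ _; rewrite mul1r. Qed.

Lemma laurentC a : laurent (fun _ => a).
Proof.
by apply: laurent_ext (laurent_poly (a%:MP)%:P) => x _ _; rewrite mhornerC hornerC mevalC.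
Qed.

Lemma laurent_coord i : laurent (fun x => x i).
Proof.
case: (ord3_cases i) => ->.
- by apply: laurent_ext (laurent_poly ('X_c0)%:P) => x _ _; rewrite mhornerC hornerC mevalXU.
- by apply: laurent_ext (laurent_poly ('X_c1)%:P) => x _ _; rewrite mhornerC hornerC mevalXU.
- by apply: laurent_ext (laurent_poly 'X) => x _ _; rewrite mhornerX hornerX.
Qed.

Lemma laurent_inv0 : laurent (fun x => (x c0)^-1).
Proof.
exists ('X_c1)%:P, 1%N => x s0 u0.
by rewrite mhornerC hornerC mevalXU /= mulrAC divff ?mul1r.
Qed.

Lemma laurent_inv1 : laurent (fun x => (x c1)^-1).
Proof.
exists ('X_c0)%:P, 1%N => x s0 u0.
by rewrite mhornerC hornerC mevalXU /= mulfK.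
Qed.

Lemma laurentM phi psi : laurent phi -> laurent psi -> laurent (fun x => phi x * psi x).
Proof.
move=> [P [N PE]] [Q [M QE]]; exists (P * Q), (N + M)%N => x s0 u0.
by rewrite mhornerM hornerM -PE // -QE // exprD; ring.
Qed.

Lemma laurentD phi psi : laurent phi -> laurent psi -> laurent (fun x => phi x + psi x).
Proof.
move=> [P [N PE]] [Q [M QE]].
exists (('X_c0 * 'X_c1) ^+ M *: P + ('X_c0 * 'X_c1) ^+ N *: Q), (N + M)%N => x s0 u0.
rewrite mhornerD !mhornerZ hornerD !hornerZ -PE // -QE //.
by rewrite !mevalXn mevalM !mevalXU exprD; ring.
Qed.

Lemma laurentX phi k : laurent phi -> laurent (fun x => phi x ^+ k).
Proof.
move=> lphi; elim: k => [|k IHk]; first by apply: laurent_ext (laurentC 1) => x _ _.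
by apply: laurent_ext (laurentM lphi IHk) => x _ _; rewrite exprS.
Qed.

Lemma laurent_meval n (p : {mpoly K[n]}) (f : 'I_n -> pt K 3 -> K) :
  (forall i, laurent (f i)) -> laurent (fun x => p.@[fun i => f i x]).
Proof.
move=> lf; apply: laurent_ext (fun x _ _ => esym (mevalE _ p)) _.
elim: (msupp p) => [|m r IHr].
  by apply: laurent_ext (laurentC 0) => x _ _; rewrite big_nil.
apply: laurent_ext (laurentD (laurentM (laurentC p@_m) _) IHr) => [x _ _|].
  by rewrite big_cons.
elim: (index_enum _) => [|i s IHs].
  by apply: laurent_ext (laurentC 1) => x _ _; rewrite big_nil.
by apply: laurent_ext (laurentM (laurentX _ (lf i)) IHs) => x _ _; rewrite big_cons.
Qed.

Lemma laurent_mpoly (p : {mpoly K[3]}) : laurent (fun x => p.@[x]).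
Proof. by apply: laurent_ext (laurent_meval p laurent_coord) => x _ _; apply: meval_eq. Qed.

Lemma laurent_div_monomial (p : {mpoly K[3]}) a b :
  laurent (fun x => p.@[x] / (x c0 ^+ a * x c1 ^+ b)).
Proof.
have inv_monomial := laurentM (laurentX a laurent_inv0) (laurentX b laurent_inv1).
by apply: laurent_ext (laurentM (laurent_mpoly p) inv_monomial) => x _ _; rewrite invfM -!exprVn.
Qed.

End Laurent.

(* Coordinates are [(s, u, c)] on [K^3] and [(s, t, u, v)] on [K^4]. *)
Section CubicCover.
Variable K : closedFieldType.

Definition generic_locus (l b2 b1 b0 h : {mpoly K[2]}) : {mpoly K[2]} :=
  l * disc3 l b2 b1 b0 * ('X_c0 * 'X_c1 * h).

Variables (l b2 b1 b0 h : {mpoly K[2]}) (kappa : {mpoly K[4]}).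
Variables (tn vn : {mpoly K[3]}) (mt nt mv nv : nat).
Variables (X : pt K 3 -> Prop) (E : pt K 3 -> pt K 4).

Definition base4 (y : pt K 4) : pt K 2 := pt_of [:: y c0; y c2].

Definition cover_inv (y : pt K 4) : pt K 3 :=
  pt_of [:: y c0; y c2; kappa.@[y] / h.@[base4 y]].

Hypothesis X_cubic : forall x,
  X x <-> [/\ x c0 != 0, x c1 != 0 & cubic_at l b2 b1 b0 (base3 x) (x c2) = 0].
Hypothesis lead_torus : forall w : pt K 2, w c0 != 0 -> w c1 != 0 -> l.@[w] != 0.
Hypothesis generic_point : exists w, (generic_locus l b2 b1 b0 h).@[w] != 0.
Hypothesis E_fix : forall x, E x c0 = x c0 /\ E x c2 = x c1.
Hypothesis E_t : forall x, x c0 != 0 -> x c1 != 0 ->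
  E x c1 = tn.@[x] / (x c0 ^+ mt * x c1 ^+ nt).
Hypothesis E_v : forall x, x c0 != 0 -> x c1 != 0 ->
  E x c3 = vn.@[x] / (x c0 ^+ mv * x c1 ^+ nv).
Hypothesis E_torus : forall x, X x -> E x c1 != 0 /\ E x c3 != 0.
Hypothesis kappa_E : forall x, X x -> kappa.@[E x] = x c2 * h.@[base3 x].
Hypothesis E_cover_inv : forall y, image_closure X E y -> h.@[base4 y] != 0 ->
  [/\ X (cover_inv y), E (cover_inv y) c1 = y c1 & E (cover_inv y) c3 = y c3].

Let gen := generic_locus l b2 b1 b0 h.
Let gen3 : {mpoly K[3]} := gen \mPo [tuple 'X_c0; 'X_c1].
Let gen4 : {mpoly K[4]} := gen \mPo [tuple 'X_c0; 'X_c2].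
Let U x := X x /\ gen3.@[x] != 0.
Let V y := image_closure X E y /\ gen4.@[y] != 0.

Let fa (i : 'I_4) : {mpoly K[3]} := nth 0 [:: 'X_c0; tn; 'X_c1; vn] i.
Let fb (i : 'I_4) : {mpoly K[3]} :=
  nth 1 [:: 1; 'X_c0 ^+ mt * 'X_c1 ^+ nt; 1; 'X_c0 ^+ mv * 'X_c1 ^+ nv] i.
Let ga (i : 'I_3) : {mpoly K[4]} := nth 0 [:: 'X_c0; 'X_c2; kappa] i.
Let gb (i : 'I_3) : {mpoly K[4]} := nth 1 [:: 1; 1; h \mPo [tuple 'X_c0; 'X_c2]] i.
Local Notation F := (rat_eval fa fb).
Local Notation G := (rat_eval ga gb).

Lemma generic_locus_torus (w : pt K 2) :
  gen.@[w] != 0 -> [/\ w c0 != 0, w c1 != 0 & h.@[w] != 0].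
Proof.
rewrite /gen /generic_locus !mevalM !mevalXU !mulf_eq0 !negb_or.
by case/andP=> _ /andP[/andP[-> ->] ->].
Qed.

Lemma pt_of2_eta (w : pt K 2) : pt_of [:: w c0; w c1] =1 w.
Proof. by move=> i; case: (ord2_cases i) => ->. Qed.

Lemma base4_ext (y z : pt K 4) : y =1 z -> base4 y =1 base4 z.
Proof. by move=> yz i; rewrite /base4 /pt_of !yz. Qed.

Lemma base3_ext (x z : pt K 3) : x =1 z -> base3 x =1 base3 z.
Proof. by move=> xz i; rewrite /base3 /pt_of !xz. Qed.

Lemma base4_E x : base4 (E x) =1 base3 x.
Proof. by case: (E_fix x) => e0 e2 i; rewrite /base4 /base3 /pt_of e0 e2. Qed.

Lemma X_ext (x z : pt K 3) : x =1 z -> X x -> X z.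
Proof.
move=> xz /X_cubic[s0 u0 cx]; apply/X_cubic; rewrite -!xz; split=> //.
by rewrite /cubic_at !(meval_eq _ (base3_ext xz)) in cx.
Qed.

Lemma meval_gen3 x : gen3.@[x] = gen.@[base3 x]. Proof. exact: meval_comp2. Qed.
Lemma meval_gen4 y : gen4.@[y] = gen.@[base4 y]. Proof. exact: meval_comp2. Qed.

Lemma rat_map_E x : x c0 != 0 -> x c1 != 0 -> rat_defined fb x /\ forall i, F x i = E x i.
Proof.
move=> s0 u0; have [e0 e2] := E_fix x; split=> i.
  by case: (ord4_cases i) => ->; rewrite /fb /=; meval_simpl;
    rewrite ?oner_neq0 ?mulf_neq0 ?expf_neq0.
case: (ord4_cases i) => ->; rewrite /rat_eval /fa /fb /=; meval_simpl;
  by rewrite ?divr1 ?E_t ?E_v.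
Qed.

Lemma rat_inv_E y : h.@[base4 y] != 0 -> rat_defined gb y /\ forall i, G y i = cover_inv y i.
Proof.
move=> hy; split=> i.
  by case: (ord3_cases i) => ->; rewrite /gb /= ?meval1 ?oner_neq0 // meval_comp2.
by case: (ord3_cases i) => ->; rewrite /rat_eval /ga /gb /= ?meval1 ?divr1 ?mevalXU // meval_comp2.
Qed.

Lemma laurent_vanish phi : laurent phi -> (forall x, U x -> phi x = 0) ->
  forall x, X x -> phi x = 0.
Proof.
move=> [P [N PE]] phiU x /X_cubic[s0 u0 cx].
have [w1 gw1] := generic_point.
have Pc : (mhorner P (base3 x)).[x c2] = 0.
  apply: (mhorner_eq0_on_cubic gw1) cx => [w c gw cw|]; last exact: lead_torus.
  have [w0 w1' hw] := generic_locus_torus gw.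
  pose z : pt K 3 := pt_of [:: w c0; w c1; c].
  have zw : base3 z =1 w := pt_of2_eta w.
  have Uz : U z.
    split; last by rewrite meval_gen3 (meval_eq _ zw).
    by apply/X_cubic; split=> //; rewrite /cubic_at !(meval_eq _ zw).
  by have := PE z w0 w1'; rewrite phiU // mulr0 (mhorner_ext _ zw) => <-.
have := PE x s0 u0; rewrite Pc => /eqP.
by rewrite mulf_eq0 expf_eq0 mulf_eq0 (negbTE s0) (negbTE u0) andbF => /eqP.
Qed.

Lemma laurent_E i : laurent (fun x => E x i).
Proof.
case: (ord4_cases i) => ->.
- by apply: laurent_ext (@laurent_coord K c0) => x _ _; case: (E_fix x).
- by apply: laurent_ext (laurent_div_monomial tn mt nt) => x s0 u0; rewrite E_t.
- by apply: laurent_ext (@laurent_coord K c1) => x _ _; case: (E_fix x).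
- by apply: laurent_ext (laurent_div_monomial vn mv nv) => x s0 u0; rewrite E_v.
Qed.

Lemma rat_map_U x : U x -> rat_defined fb x /\ V (F x).
Proof.
case=> Xx gx; have /X_cubic[s0 u0 _] := Xx; have [fb_def FE] := rat_map_E s0 u0.
have [e0 e2] := E_fix x; have [t0 v0] := E_torus Xx.
split=> //; split; last first.
  by rewrite meval_gen4 (meval_eq _ (base4_ext FE)) (meval_eq _ (base4_E x)) -meval_gen3.
split; last by move=> p pE; apply: pE; exists x.
by move=> i; rewrite FE; case: (ord4_cases i) => ->; rewrite ?e0 ?e2.
Qed.

Lemma rat_inv_V y : V y -> rat_defined gb y /\ U (G y).
Proof.
case=> Yy gy; rewrite meval_gen4 in gy; have [_ _ hy] := generic_locus_torus gy.
have [gb_def GE] := rat_inv_E hy; have [Xc _ _] := E_cover_inv Yy hy.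
split=> //; split; first by apply: X_ext Xc => i; rewrite GE.
by rewrite meval_gen3 (meval_eq _ (base3_ext GE)).
Qed.

Lemma rat_invK x : U x -> forall i, G (F x) i = x i.
Proof.
case=> Xx gx; have /X_cubic[s0 u0 _] := Xx; have [_ FE] := rat_map_E s0 u0.
have [e0 e2] := E_fix x.
rewrite meval_gen3 in gx; have [_ _ hx] := generic_locus_torus gx.
have hEx : h.@[base4 (E x)] != 0 by rewrite (meval_eq _ (base4_E x)).
have [_ GE] := rat_inv_E hEx.
move=> i; rewrite (rat_eval_ext _ _ FE) GE /cover_inv.
case: (ord3_cases i) => -> //=; rewrite ?e0 ?e2 //.
by rewrite kappa_E // (meval_eq _ (base4_E x)) mulfK.
Qed.

Lemma rat_mapK y : V y -> forall i, F (G y) i = y i.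
Proof.
case=> Yy gy; rewrite meval_gen4 in gy; have [_ _ hy] := generic_locus_torus gy.
have [_ GE] := rat_inv_E hy; have [Xc Ec1 Ec3] := E_cover_inv Yy hy.
have /X_cubic[s0 u0 _] := Xc; have [_ FE] := rat_map_E s0 u0.
have [e0 e2] := E_fix (cover_inv y).
move=> i; rewrite (rat_eval_ext _ _ GE) FE.
by case: (ord4_cases i) => ->; rewrite ?e0 ?e2.
Qed.

Lemma U_dense x : X x -> zclosure U x.
Proof. by move=> Xx p pU; apply: (laurent_vanish (laurent_mpoly p)) pU _ Xx. Qed.

Lemma V_dense y : image_closure X E y -> zclosure V y.
Proof.
move=> Yy p pV; apply: (image_closure_vanish Yy) => x.
apply: (@laurent_vanish (fun z => p.@[E z])) => [|z Uz].
  by apply: laurent_ext (laurent_meval p laurent_E) => z _ _; apply: meval_eq.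
have [_ Vz] := rat_map_U Uz; have /X_cubic[s0 u0 _] := Uz.1; have [_ FE] := rat_map_E s0 u0.
by rewrite -(meval_eq _ FE) pV.
Qed.

Theorem cubic_cover_birational : birational X (image_closure X E).
Proof.
exists U, V, fa, fb, ga, gb; split.
- by split; apply: dense_open_in_principal; [exact: U_dense | exact: V_dense].
- exact: rat_map_U.
- exact: rat_inv_V.
- exact: rat_invK.
- exact: rat_mapK.
Qed.

End CubicCover.

Section SLFormulas.
Variable R : comPzRingType.
Implicit Types s t u v c k h : R.

Definition sl_lead s u := s ^+ 2 * u ^+ 2.
Definition sl_b2 s u := 2 * s * u - s ^+ 3 * u - s * u ^+ 3 + 2 * s ^+ 3 * u ^+ 3.
Definition sl_b1 s u :=
  1 - s ^+ 2 - u ^+ 2 + 4 * s ^+ 2 * u ^+ 2 - s ^+ 4 * u ^+ 2 - s ^+ 2 * u ^+ 4 + s ^+ 4 * u ^+ 4.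
Definition sl_b0 s u := s * u * (s ^+ 2 - 1) * (u ^+ 2 - 1).
Definition sl_h s u := s ^+ 2 - u ^+ 2.
Definition sl_tnum s u c :=
  s * u - s * u ^+ 3 + s ^+ 3 * u ^+ 3 + c * (2 * s ^+ 2 * u ^+ 2 + 1 - u ^+ 2) + c ^+ 2 * s * u.
Definition sl_kappa s t u v := s * u * (t * s ^+ 2 - v * u ^+ 2 - s ^+ 2 + u ^+ 2).
(* [h ^+ 2 * sl_tnum s u (k / h)] *)
Definition sl_tnum_hom s u k h :=
  (s * u - s * u ^+ 3 + s ^+ 3 * u ^+ 3) * h ^+ 2 + k * h * (2 * s ^+ 2 * u ^+ 2 + 1 - u ^+ 2)
  + k ^+ 2 * s * u.
(* Clearing denominators in [t = e_t s u (kappa / h)], [v = e_v s u (kappa / h)] and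
   [C_eq s u (kappa / h) = 0]. *)
Definition sl_rel_t s t u v :=
  sl_tnum_hom s u (sl_kappa s t u v) (sl_h s u) - s ^+ 3 * u * sl_h s u ^+ 2 * t.
Definition sl_rel_v s t u v :=
  sl_tnum_hom u s (sl_kappa s t u v) (sl_h s u) - u ^+ 3 * s * sl_h s u ^+ 2 * v.
Definition sl_rel_c s t u v :=
  let k := sl_kappa s t u v in let h := sl_h s u in
  sl_lead s u * k ^+ 3 + sl_b2 s u * k ^+ 2 * h + sl_b1 s u * k * h ^+ 2 + sl_b0 s u * h ^+ 3.

End SLFormulas.

Section SLIdentities.
Variables (K : fieldType) (s u : K).
Hypotheses (s0 : s != 0) (u0 : u != 0).

Lemma sl_cubicE c : sl_lead s u * c ^+ 3 + sl_b2 s u * c ^+ 2 + sl_b1 s u * c + sl_b0 s u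
  = s ^+ 2 * u ^+ 2 * C_eq s u c.
Proof. by rewrite /sl_lead /sl_b2 /sl_b1 /sl_b0 /C_eq; field; rewrite s0 u0. Qed.

Lemma e_t_neq0 c : C_eq s u c = 0 -> e_t s u c != 0.
Proof.
move=> Ceq0; apply/eqP => t0.
have : e_t s u c * (u ^- 2 - s ^+ 2 * u ^- 2 + s ^+ 2
    + (2 * s * u^-1 - s ^+ 3 * u^-1 + s ^+ 3 * u) * c + s ^+ 2 * c ^+ 2)
    = 1 + (s^-1 * u^-1 + s * u + c) * C_eq s u c.
  by rewrite /e_t /C_eq; field; rewrite s0 u0.
by rewrite t0 Ceq0 mul0r mulr0 addr0 => /eqP; rewrite eq_sym oner_eq0.
Qed.

Lemma e_t_tnum c : e_t s u c = sl_tnum s u c / (s ^+ 3 * u).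
Proof. by rewrite /e_t /sl_tnum; field; rewrite s0 u0. Qed.

Lemma sl_kappa_e c : sl_kappa s (e_t s u c) u (e_v s u c) = c * sl_h s u.
Proof. by rewrite /sl_kappa /e_t /e_v /sl_h; field; rewrite s0 u0. Qed.

Lemma sl_rel_t_e c : sl_rel_t s (e_t s u c) u (e_v s u c) = 0.
Proof. by rewrite /sl_rel_t /sl_tnum_hom /sl_kappa /e_t /e_v /sl_h; field; rewrite s0 u0. Qed.

Lemma sl_rel_v_e c : sl_rel_v s (e_t s u c) u (e_v s u c) = 0.
Proof. by rewrite /sl_rel_v /sl_tnum_hom /sl_kappa /e_t /e_v /sl_h; field; rewrite s0 u0. Qed.

Lemma sl_rel_c_e c :
  sl_rel_c s (e_t s u c) u (e_v s u c) = sl_h s u ^+ 3 * (s ^+ 2 * u ^+ 2 * C_eq s u c).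
Proof.
rewrite /sl_rel_c /sl_lead /sl_b2 /sl_b1 /sl_b0 /sl_kappa /e_t /e_v /sl_h /C_eq.
by field; rewrite s0 u0.
Qed.

Hypothesis h0 : sl_h s u != 0.

Lemma sl_rel_t_inv t v : sl_rel_t s t u v = 0 -> e_t s u (sl_kappa s t u v / sl_h s u) = t.
Proof.
have -> : sl_rel_t s t u v
    = s ^+ 3 * u * sl_h s u ^+ 2 * (e_t s u (sl_kappa s t u v / sl_h s u) - t).
  by rewrite /sl_rel_t /sl_tnum_hom /sl_kappa /e_t; field; rewrite s0 u0 h0.
by move/eqP; rewrite !mulf_eq0 (negbTE s0) (negbTE u0) (negbTE h0) /= subr_eq0 => /eqP.
Qed.

Lemma sl_rel_v_inv t v : sl_rel_v s t u v = 0 -> e_v s u (sl_kappa s t u v / sl_h s u) = v.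
Proof.
have -> : sl_rel_v s t u v
    = u ^+ 3 * s * sl_h s u ^+ 2 * (e_v s u (sl_kappa s t u v / sl_h s u) - v).
  by rewrite /sl_rel_v /sl_tnum_hom /sl_kappa /e_v; field; rewrite s0 u0 h0.
by move/eqP; rewrite !mulf_eq0 (negbTE s0) (negbTE u0) (negbTE h0) /= subr_eq0 => /eqP.
Qed.

Lemma sl_rel_c_inv t v : sl_rel_c s t u v = 0 -> C_eq s u (sl_kappa s t u v / sl_h s u) = 0.
Proof.
have -> : sl_rel_c s t u v
    = sl_h s u ^+ 3 * (s ^+ 2 * u ^+ 2 * C_eq s u (sl_kappa s t u v / sl_h s u)).
  by rewrite /sl_rel_c /sl_lead /sl_b2 /sl_b1 /sl_b0 /C_eq; field; rewrite s0 u0 h0.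
by move/eqP; rewrite !mulf_eq0 (negbTE s0) (negbTE u0) (negbTE h0) /= => /eqP.
Qed.

End SLIdentities.

Lemma e_v_swap (K : fieldType) (s u c : K) : e_v s u c = e_t u s c.
Proof. by []. Qed.

Lemma C_eq_swap (K : fieldType) (s u c : K) : C_eq s u c = C_eq u s c.
Proof. by rewrite /C_eq; ring. Qed.

Section SLPolynomials.
Variables (K : fieldType) (n : nat).
Implicit Types (i j k m : 'I_n) (y : pt K n).

Lemma meval_sl_lead i j y : (sl_lead 'X_i 'X_j).@[y] = sl_lead (y i) (y j).
Proof. by rewrite /sl_lead; meval_simpl. Qed.
Lemma meval_sl_b2 i j y : (sl_b2 'X_i 'X_j).@[y] = sl_b2 (y i) (y j).
Proof. by rewrite /sl_b2; meval_simpl. Qed.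
Lemma meval_sl_b1 i j y : (sl_b1 'X_i 'X_j).@[y] = sl_b1 (y i) (y j).
Proof. by rewrite /sl_b1; meval_simpl. Qed.
Lemma meval_sl_b0 i j y : (sl_b0 'X_i 'X_j).@[y] = sl_b0 (y i) (y j).
Proof. by rewrite /sl_b0; meval_simpl. Qed.
Lemma meval_sl_h i j y : (sl_h 'X_i 'X_j).@[y] = sl_h (y i) (y j).
Proof. by rewrite /sl_h; meval_simpl. Qed.
Lemma meval_sl_tnum i j k y : (sl_tnum 'X_i 'X_j 'X_k).@[y] = sl_tnum (y i) (y j) (y k).
Proof. by rewrite /sl_tnum; meval_simpl. Qed.
Lemma meval_sl_kappa i j k m y :
  (sl_kappa 'X_i 'X_j 'X_k 'X_m).@[y] = sl_kappa (y i) (y j) (y k) (y m).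
Proof. by rewrite /sl_kappa; meval_simpl. Qed.
Lemma meval_sl_rel_t i j k m y :
  (sl_rel_t 'X_i 'X_j 'X_k 'X_m).@[y] = sl_rel_t (y i) (y j) (y k) (y m).
Proof. by rewrite /sl_rel_t /sl_tnum_hom /sl_kappa /sl_h; meval_simpl. Qed.
Lemma meval_sl_rel_v i j k m y :
  (sl_rel_v 'X_i 'X_j 'X_k 'X_m).@[y] = sl_rel_v (y i) (y j) (y k) (y m).
Proof. by rewrite /sl_rel_v /sl_tnum_hom /sl_kappa /sl_h; meval_simpl. Qed.
Lemma meval_sl_rel_c i j k m y :
  (sl_rel_c 'X_i 'X_j 'X_k 'X_m).@[y] = sl_rel_c (y i) (y j) (y k) (y m).
Proof. by rewrite /sl_rel_c /sl_lead /sl_b2 /sl_b1 /sl_b0 /sl_kappa /sl_h; meval_simpl. Qed.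

End SLPolynomials.

Section SLBirational.
Variable K : closedFieldType.
Hypothesis charK : [pchar K] =i pred0.

Lemma sl_generic_point :
  (generic_locus (sl_lead 'X_c0 'X_c1) (sl_b2 'X_c0 'X_c1) (sl_b1 'X_c0 'X_c1) (sl_b0 'X_c0 'X_c1)
     (sl_h 'X_c0 'X_c1)).@[pt_of [:: 2; 3]] != 0 :> K.
Proof.
rewrite /generic_locus !mevalM meval_disc3 !mevalXU meval_sl_lead meval_sl_b2 meval_sl_b1
  meval_sl_b0 meval_sl_h /=.
have -> : sl_lead 2 3 * disc3 (sl_lead 2 3) (sl_b2 2 3) (sl_b1 2 3) (sl_b0 2 3)
    * (2 * 3 * sl_h 2 3) = 2 ^+ 12 * 3 ^+ 7 * 5 * 3079%:R :> K.
  by rewrite /sl_lead /sl_b2 /sl_b1 /sl_b0 /sl_h /disc3; ring.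
by rewrite -!natrX -!natrM ((pcharf0P K).1 charK).
Qed.

Lemma sl_cover_inv y : image_closure (@frakC K) (@emap K) y ->
  (sl_h 'X_c0 'X_c1).@[base4 y] != 0 ->
  let x := cover_inv (sl_h 'X_c0 'X_c1) (sl_kappa 'X_c0 'X_c1 'X_c2 'X_c3) y in
  [/\ frakC x, emap x c1 = y c1 & emap x c3 = y c3].
Proof.
move=> Yy; rewrite meval_sl_h /= => h0.
have [y0 y2] : y c0 != 0 /\ y c2 != 0 by case: Yy => ty _; split; apply: ty.
have rel_t0 : sl_rel_t (y c0) (y c1) (y c2) (y c3) = 0.
  rewrite -meval_sl_rel_t; apply: (image_closure_vanish Yy) => x [s0 [u0 _]].
  by rewrite meval_sl_rel_t /emap /= sl_rel_t_e.
have rel_v0 : sl_rel_v (y c0) (y c1) (y c2) (y c3) = 0.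
  rewrite -meval_sl_rel_v; apply: (image_closure_vanish Yy) => x [s0 [u0 _]].
  by rewrite meval_sl_rel_v /emap /= sl_rel_v_e.
have rel_c0 : sl_rel_c (y c0) (y c1) (y c2) (y c3) = 0.
  rewrite -meval_sl_rel_c; apply: (image_closure_vanish Yy) => x [s0 [u0 C0]].
  by rewrite meval_sl_rel_c /emap /= sl_rel_c_e // C0 !mulr0.
rewrite /cover_inv /frakC /emap /= meval_sl_kappa meval_sl_h /=.
by rewrite sl_rel_t_inv // sl_rel_v_inv // sl_rel_c_inv.
Qed.

Theorem sl_birational : birational (@frakC K) (@frakE0 K).
Proof.
apply: (@cubic_cover_birational K (sl_lead 'X_c0 'X_c1) (sl_b2 'X_c0 'X_c1) (sl_b1 'X_c0 'X_c1)
  (sl_b0 'X_c0 'X_c1) (sl_h 'X_c0 'X_c1) (sl_kappa 'X_c0 'X_c1 'X_c2 'X_c3)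
  (sl_tnum 'X_c0 'X_c1 'X_c2) (sl_tnum 'X_c1 'X_c0 'X_c2) 3 1 1 3).
- move=> x; rewrite /cubic_at meval_sl_lead meval_sl_b2 meval_sl_b1 meval_sl_b0 /=.
  split=> [[s0 [u0 C0]]|[s0 u0]]; first by rewrite sl_cubicE // C0 mulr0.
  rewrite sl_cubicE // => /eqP; rewrite !mulf_eq0 (negbTE s0) (negbTE u0) /= => /eqP C0.
  by split=> //; split.
- by move=> w s0 u0; rewrite meval_sl_lead /sl_lead mulf_neq0 ?expf_neq0.
- by exists (pt_of [:: 2; 3]); apply: sl_generic_point.
- by [].
- by move=> x s0 u0; rewrite meval_sl_tnum /emap /= e_t_tnum ?expr1.
- move=> x s0 u0; rewrite meval_sl_tnum /emap /= e_v_swap e_t_tnum //.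
  by rewrite expr1 [x c0 * _]mulrC.
- move=> x [s0 [u0 C0]]; rewrite /emap /= e_v_swap.
  by rewrite !e_t_neq0 // -C_eq_swap.
- by move=> x [s0 [u0 _]]; rewrite meval_sl_kappa meval_sl_h /emap /= sl_kappa_e.
- exact: sl_cover_inv.
Qed.

End SLBirational.

Section PSLFormulas.
Variable R : comPzRingType.
Implicit Types s t u v c k h : R.

Definition psl_b2 s u := 2 - s - u + 2 * s * u.
Definition psl_b1 s u := 1 - s - u + 4 * s * u - s ^+ 2 * u - s * u ^+ 2 + s ^+ 2 * u ^+ 2.
Definition psl_b0 s u := s * u * (s - 1) * (u - 1).
Definition psl_h s u := s - u.
Definition psl_tnum s u c :=
  s * u - s * u ^+ 2 + s ^+ 2 * u ^+ 2 + c * (2 * s * u + 1 - u) + c ^+ 2.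
Definition psl_kappa s t u v := s * u * (t * s - v * u - s + u).
Definition psl_tnum_hom s u k h :=
  (s * u - s * u ^+ 2 + s ^+ 2 * u ^+ 2) * h ^+ 2 + k * h * (2 * s * u + 1 - u) + k ^+ 2.
Definition psl_rel_t s t u v :=
  psl_tnum_hom s u (psl_kappa s t u v) (psl_h s u) - s ^+ 2 * u * psl_h s u ^+ 2 * t.
Definition psl_rel_v s t u v :=
  psl_tnum_hom u s (psl_kappa s t u v) (psl_h s u) - u ^+ 2 * s * psl_h s u ^+ 2 * v.
Definition psl_rel_c s t u v :=
  let k := psl_kappa s t u v in let h := psl_h s u in
  k ^+ 3 + psl_b2 s u * k ^+ 2 * h + psl_b1 s u * k * h ^+ 2 + psl_b0 s u * h ^+ 3.

End PSLFormulas.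

Section PSLIdentities.
Variables (K : fieldType) (s u : K).
Hypotheses (s0 : s != 0) (u0 : u != 0).

Lemma psl_cubicE c : 1 * c ^+ 3 + psl_b2 s u * c ^+ 2 + psl_b1 s u * c + psl_b0 s u
  = Cbar_eq s u c.
Proof. by rewrite /psl_b2 /psl_b1 /psl_b0 /Cbar_eq; ring. Qed.

Lemma ebar_t_neq0 d : Cbar_eq s u d = 0 -> ebar_t s u d != 0.
Proof.
move=> Ceq0; apply/eqP => t0.
have : ebar_t s u d * (u^-1 - s * u^-1 + s + (2 * u^-1 - s * u^-1 + s) * d + u^-1 * d ^+ 2)
    = 1 + (s ^- 2 * u ^- 2 + s^-1 * u^-1 + s ^- 2 * u ^- 2 * d) * Cbar_eq s u d.
  by rewrite /ebar_t /Cbar_eq; field; rewrite s0 u0.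
by rewrite t0 Ceq0 mul0r mulr0 addr0 => /eqP; rewrite eq_sym oner_eq0.
Qed.

Lemma ebar_t_tnum d : ebar_t s u d = psl_tnum s u d / (s ^+ 2 * u).
Proof. by rewrite /ebar_t /psl_tnum; field; rewrite s0 u0. Qed.

Lemma psl_kappa_e d : psl_kappa s (ebar_t s u d) u (ebar_v s u d) = d * psl_h s u.
Proof. by rewrite /psl_kappa /ebar_t /ebar_v /psl_h; field; rewrite s0 u0. Qed.

Lemma psl_rel_t_e d : psl_rel_t s (ebar_t s u d) u (ebar_v s u d) = 0.
Proof.
by rewrite /psl_rel_t /psl_tnum_hom /psl_kappa /ebar_t /ebar_v /psl_h; field; rewrite s0 u0.
Qed.

Lemma psl_rel_v_e d : psl_rel_v s (ebar_t s u d) u (ebar_v s u d) = 0.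
Proof.
by rewrite /psl_rel_v /psl_tnum_hom /psl_kappa /ebar_t /ebar_v /psl_h; field; rewrite s0 u0.
Qed.

Lemma psl_rel_c_e d :
  psl_rel_c s (ebar_t s u d) u (ebar_v s u d) = psl_h s u ^+ 3 * Cbar_eq s u d.
Proof.
rewrite /psl_rel_c /psl_b2 /psl_b1 /psl_b0 /psl_kappa /ebar_t /ebar_v /psl_h /Cbar_eq.
by field; rewrite s0 u0.
Qed.

Hypothesis h0 : psl_h s u != 0.

Lemma psl_rel_t_inv t v :
  psl_rel_t s t u v = 0 -> ebar_t s u (psl_kappa s t u v / psl_h s u) = t.
Proof.
have -> : psl_rel_t s t u v
    = s ^+ 2 * u * psl_h s u ^+ 2 * (ebar_t s u (psl_kappa s t u v / psl_h s u) - t).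
  by rewrite /psl_rel_t /psl_tnum_hom /psl_kappa /ebar_t; field; rewrite s0 u0 h0.
by move/eqP; rewrite !mulf_eq0 (negbTE s0) (negbTE u0) (negbTE h0) /= subr_eq0 => /eqP.
Qed.

Lemma psl_rel_v_inv t v :
  psl_rel_v s t u v = 0 -> ebar_v s u (psl_kappa s t u v / psl_h s u) = v.
Proof.
have -> : psl_rel_v s t u v
    = u ^+ 2 * s * psl_h s u ^+ 2 * (ebar_v s u (psl_kappa s t u v / psl_h s u) - v).
  by rewrite /psl_rel_v /psl_tnum_hom /psl_kappa /ebar_v; field; rewrite s0 u0 h0.
by move/eqP; rewrite !mulf_eq0 (negbTE s0) (negbTE u0) (negbTE h0) /= subr_eq0 => /eqP.
Qed.

Lemma psl_rel_c_inv t v :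
  psl_rel_c s t u v = 0 -> Cbar_eq s u (psl_kappa s t u v / psl_h s u) = 0.
Proof.
have -> : psl_rel_c s t u v = psl_h s u ^+ 3 * Cbar_eq s u (psl_kappa s t u v / psl_h s u).
  by rewrite /psl_rel_c /psl_b2 /psl_b1 /psl_b0 /Cbar_eq; field; rewrite h0.
by move/eqP; rewrite !mulf_eq0 (negbTE h0) /= => /eqP.
Qed.

End PSLIdentities.

Lemma ebar_v_swap (K : fieldType) (s u d : K) : ebar_v s u d = ebar_t u s d.
Proof. by []. Qed.

Lemma Cbar_eq_swap (K : fieldType) (s u d : K) : Cbar_eq s u d = Cbar_eq u s d.
Proof. by rewrite /Cbar_eq; ring. Qed.

Section PSLPolynomials.
Variables (K : fieldType) (n : nat).
Implicit Types (i j k m : 'I_n) (y : pt K n).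

Lemma meval_psl_b2 i j y : (psl_b2 'X_i 'X_j).@[y] = psl_b2 (y i) (y j).
Proof. by rewrite /psl_b2; meval_simpl. Qed.
Lemma meval_psl_b1 i j y : (psl_b1 'X_i 'X_j).@[y] = psl_b1 (y i) (y j).
Proof. by rewrite /psl_b1; meval_simpl. Qed.
Lemma meval_psl_b0 i j y : (psl_b0 'X_i 'X_j).@[y] = psl_b0 (y i) (y j).
Proof. by rewrite /psl_b0; meval_simpl. Qed.
Lemma meval_psl_h i j y : (psl_h 'X_i 'X_j).@[y] = psl_h (y i) (y j).
Proof. by rewrite /psl_h; meval_simpl. Qed.
Lemma meval_psl_tnum i j k y : (psl_tnum 'X_i 'X_j 'X_k).@[y] = psl_tnum (y i) (y j) (y k).
Proof. by rewrite /psl_tnum; meval_simpl. Qed.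
Lemma meval_psl_kappa i j k m y :
  (psl_kappa 'X_i 'X_j 'X_k 'X_m).@[y] = psl_kappa (y i) (y j) (y k) (y m).
Proof. by rewrite /psl_kappa; meval_simpl. Qed.
Lemma meval_psl_rel_t i j k m y :
  (psl_rel_t 'X_i 'X_j 'X_k 'X_m).@[y] = psl_rel_t (y i) (y j) (y k) (y m).
Proof. by rewrite /psl_rel_t /psl_tnum_hom /psl_kappa /psl_h; meval_simpl. Qed.
Lemma meval_psl_rel_v i j k m y :
  (psl_rel_v 'X_i 'X_j 'X_k 'X_m).@[y] = psl_rel_v (y i) (y j) (y k) (y m).
Proof. by rewrite /psl_rel_v /psl_tnum_hom /psl_kappa /psl_h; meval_simpl. Qed.
Lemma meval_psl_rel_c i j k m y :
  (psl_rel_c 'X_i 'X_j 'X_k 'X_m).@[y] = psl_rel_c (y i) (y j) (y k) (y m).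
Proof. by rewrite /psl_rel_c /psl_b2 /psl_b1 /psl_b0 /psl_kappa /psl_h; meval_simpl. Qed.

End PSLPolynomials.

Section PSLBirational.
Variable K : closedFieldType.
Hypothesis charK : [pchar K] =i pred0.

Lemma psl_generic_point :
  (generic_locus 1 (psl_b2 'X_c0 'X_c1) (psl_b1 'X_c0 'X_c1) (psl_b0 'X_c0 'X_c1)
     (psl_h 'X_c0 'X_c1)).@[pt_of [:: 2; 3]] != 0 :> K.
Proof.
rewrite /generic_locus !mevalM meval_disc3 !mevalXU meval1 meval_psl_b2 meval_psl_b1
  meval_psl_b0 meval_psl_h /=.
have -> : 1 * disc3 1 (psl_b2 2 3) (psl_b1 2 3) (psl_b0 2 3) * (2 * 3 * psl_h 2 3)
  = 2 ^+ 3 * 3 * 971%:R :> K.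
  by rewrite /psl_b2 /psl_b1 /psl_b0 /psl_h /disc3; ring.
by rewrite -!natrX -!natrM ((pcharf0P K).1 charK).
Qed.

Lemma psl_cover_inv y : image_closure (@frakCbar K) (@ebarmap K) y ->
  (psl_h 'X_c0 'X_c1).@[base4 y] != 0 ->
  let x := cover_inv (psl_h 'X_c0 'X_c1) (psl_kappa 'X_c0 'X_c1 'X_c2 'X_c3) y in
  [/\ frakCbar x, ebarmap x c1 = y c1 & ebarmap x c3 = y c3].
Proof.
move=> Yy; rewrite meval_psl_h /= => h0.
have [y0 y2] : y c0 != 0 /\ y c2 != 0 by case: Yy => ty _; split; apply: ty.
have rel_t0 : psl_rel_t (y c0) (y c1) (y c2) (y c3) = 0.
  rewrite -meval_psl_rel_t; apply: (image_closure_vanish Yy) => x [s0 [u0 _]].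
  by rewrite meval_psl_rel_t /ebarmap /= psl_rel_t_e.
have rel_v0 : psl_rel_v (y c0) (y c1) (y c2) (y c3) = 0.
  rewrite -meval_psl_rel_v; apply: (image_closure_vanish Yy) => x [s0 [u0 _]].
  by rewrite meval_psl_rel_v /ebarmap /= psl_rel_v_e.
have rel_c0 : psl_rel_c (y c0) (y c1) (y c2) (y c3) = 0.
  rewrite -meval_psl_rel_c; apply: (image_closure_vanish Yy) => x [s0 [u0 C0]].
  by rewrite meval_psl_rel_c /ebarmap /= psl_rel_c_e // C0 mulr0.
rewrite /cover_inv /frakCbar /ebarmap /= meval_psl_kappa meval_psl_h /=.
by rewrite psl_rel_t_inv // psl_rel_v_inv // psl_rel_c_inv.
Qed.

Theorem psl_birational : birational (@frakCbar K) (@frakE0bar K).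
Proof.
apply: (@cubic_cover_birational K 1 (psl_b2 'X_c0 'X_c1) (psl_b1 'X_c0 'X_c1)
  (psl_b0 'X_c0 'X_c1) (psl_h 'X_c0 'X_c1) (psl_kappa 'X_c0 'X_c1 'X_c2 'X_c3)
  (psl_tnum 'X_c0 'X_c1 'X_c2) (psl_tnum 'X_c1 'X_c0 'X_c2) 2 1 1 2).
- move=> x; rewrite /cubic_at meval1 meval_psl_b2 meval_psl_b1 meval_psl_b0 /= psl_cubicE.
  by split=> [[s0 [u0 C0]]|[s0 u0 C0]].
- by move=> w _ _; rewrite meval1 oner_neq0.
- by exists (pt_of [:: 2; 3]); apply: psl_generic_point.
- by [].
- by move=> x s0 u0; rewrite meval_psl_tnum /ebarmap /= ebar_t_tnum ?expr1.
- move=> x s0 u0; rewrite meval_psl_tnum /ebarmap /= ebar_v_swap ebar_t_tnum //.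
  by rewrite expr1 [x c0 * _]mulrC.
- move=> x [s0 [u0 C0]]; rewrite /ebarmap /= ebar_v_swap.
  by rewrite !ebar_t_neq0 // -Cbar_eq_swap.
- by move=> x [s0 [u0 _]]; rewrite meval_psl_kappa meval_psl_h /ebarmap /= psl_kappa_e.
- exact: psl_cover_inv.
Qed.

End PSLBirational.

Unset Implicit Arguments.
Theorem mainTheorem7 (K : closedFieldType) (charK : [pchar K] =i pred0) :
  birational (@frakC K) (@frakE0 K) /\ birational (@frakCbar K) (@frakE0bar K).
Proof. by split; [exact: sl_birational | exact: psl_birational]. Qed.
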